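(* Let $(M,\rho)$ be a complete metric space, let $f:M\to\mathbb{R}\cup\{+\infty\}$ be proper, lower semicontinuous and bounded below, and let $g:M\to\mathbb{R}$ be continuous with $$|\nabla f|(x)>|\nabla g|(x)\qquad\text{for all }x\in\operatorname{dom} f\setminus 0\operatorname{crit} f.$$ Then for every $x_0\in\operatorname{dom} f$ at least one of the following holds: (a) there exists $\bar x\in 0\operatorname{crit} f$ with $f(x_0)-g(x_0)\ge f(\bar x)-g(\bar x)$; (b) for every sequence of positive numbers $\varepsilon_n\searrow0$ there exists a sequence $(x_n)_{n\ge1}$ with $x_n\in\varepsilon_n\operatorname{crit} f$ for all $n$, which has no convergent subsequence, and which (together with the given $x_0$) satisfies $$\sum_{n=1}^\infty\varepsilon_n\rho(x_n,x_{n-1})<\infty\quad\text{and}\quad f(x_n)-g(x_n)\ge f(x_{n+1})-g(x_{n+1})\ \text{ for all } n\ge0.$$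
   Context: $\operatorname{dom} f:=\{x:f(x)<+\infty\}$. $[t]^+:=\max\{0,t\}$ (with $[f(x)-f(y)]^+:=0$ if $f(y)=+\infty$). For $x\in\operatorname{dom} f$, the local slope is $|\nabla f|(x):=\limsup_{y\to x,\,y\neq x}\frac{[f(x)-f(y)]^+}{\rho(x,y)}\in[0,+\infty]$ (equal to $0$ at isolated points). For $\varepsilon\ge0$, $\varepsilon\operatorname{crit} f:=\{x\in\operatorname{dom} f:\ |\nabla f|(x)\le\varepsilon\}$. *)

From Stdlib Require Import Reals.
From Coquelicot Require Import Coquelicot.
Open Scope R_scope.

Section MetricDefs.
Context {M : Type} (d : M -> M -> R).

Definition is_metric : Prop :=
  (forall x y, 0 <= d x y) /\
  (forall x y, d x y = 0 <-> x = y) /\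
  (forall x y, d x y = d y x) /\
  (forall x y z, d x z <= d x y + d y z).

Definition mconv (u : nat -> M) (l : M) : Prop :=
  forall e, 0 < e -> exists N, forall n, (N <= n)%nat -> d (u n) l < e.

Definition mcauchy (u : nat -> M) : Prop :=
  forall e, 0 < e -> exists N, forall m n, (N <= m)%nat -> (N <= n)%nat ->
    d (u m) (u n) < e.

Definition mcomplete : Prop :=
  forall u, mcauchy u -> exists l, mconv u l.

Definition dom (f : M -> Rbar) (x : M) : Prop := Rbar_lt (f x) p_infty.

Definition proper_fun (f : M -> Rbar) : Prop :=
  (forall x, f x <> m_infty) /\ (exists x, dom f x).

Definition bounded_below (f : M -> Rbar) : Prop :=
  exists c : R, forall x, Rbar_le (Finite c) (f x).

Definition lsc (f : M -> Rbar) : Prop :=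
  forall x (t : R), Rbar_lt (Finite t) (f x) ->
    exists delta, 0 < delta /\ forall y, d x y < delta -> Rbar_lt (Finite t) (f y).

Definition mcontinuous (g : M -> R) : Prop :=
  forall x e, 0 < e -> exists delta, 0 < delta /\
    forall y, d x y < delta -> Rabs (g y - g x) < e.

(** [a - b]^+ for a = f x (finite when x in dom f), with the convention
    [a - b]^+ := 0 when b = +oo. *)
Definition pos_diff (a b : Rbar) : R :=
  match a, b with
  | Finite a', Finite b' => Rmax 0 (a' - b')
  | _, _ => 0
  end.

(** sup of [f x - f y]^+ / d(x,y) over 0 < d(x,y) < delta (0 added to the
    set, which does not change the limsup since all ratios are >= 0, and
    gives slope 0 at isolated points). *)
Definition slope_ball (f : M -> Rbar) (x : M) (delta : R) : Rbar :=
  Lub_Rbar (fun r => r = 0 \/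
    exists y, 0 < d x y /\ d x y < delta /\ r = pos_diff (f x) (f y) / d x y).

(** local slope |nabla f|(x) = limsup_{y -> x, y <> x} [f x - f y]^+ / d(x,y) *)
Definition slope (f : M -> Rbar) (x : M) : Rbar :=
  Rbar_glb (fun v => exists delta, 0 < delta /\ v = slope_ball f x delta).

Definition crit (eps : R) (f : M -> Rbar) (x : M) : Prop :=
  dom f x /\ Rbar_le (slope f x) (Finite eps).

End MetricDefs.

(** Starting from x_0, each x_(k+1) is produced by Ekeland's variational
    principle with weight eps_k, applied to f on the sublevel set
    {f - g <= f(x_k) - g(x_k)}.  At a point z of that set where
    |nabla f|(z) > e >= 0, the hypothesis |nabla g|(z) < |nabla f|(z) yields
    points y arbitrarily close to z with smaller f - g along which f drops
    faster than e * rho(z, y); this contradicts the Ekeland inequality, so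
    x_(k+1) is eps_k-critical.  The Ekeland inequalities
    f(x_(k+1)) + eps_k rho(x_(k+1), x_k) <= f(x_k) telescope, giving the
    summability since f is bounded below.  A limit l of a subsequence stays
    in every sublevel set and, by lower semicontinuity and eps_k -> 0,
    minimises f on {f - g <= f(l) - g(l)}; by the same slope argument with
    e = 0 it is 0-critical, which is alternative (a). *)

From Stdlib Require Import Reals Lra Lia Classical ClassicalEpsilon.
From Coquelicot Require Import Coquelicot.
Open Scope R_scope.

Lemma Rbar_lt_exists_between (a b : Rbar) (e : R) :
  Rbar_lt a b -> Rbar_lt (Finite e) b ->
  exists c, e < c /\ Rbar_lt a (Finite c) /\ Rbar_lt (Finite c) b.
Proof.
  destruct a as [ra| |]; destruct b as [rb| |]; simpl; intros H1 H2; try tauto.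
  - exists ((Rmax e ra + rb) / 2). unfold Rmax; destruct Rle_dec; lra.
  - exists (Rmax e ra + 1). unfold Rmax; destruct Rle_dec; lra.
  - exists ((e + rb) / 2). lra.
  - exists (e + 1). lra.
Qed.

Lemma dependent_choice_seq {A : Type} (I : A -> Prop) (Rel : nat -> A -> A -> Prop)
  (a : A) :
  I a -> (forall k x, I x -> exists y, I y /\ Rel k x y) ->
  exists u : nat -> A, u O = a /\ forall k, I (u k) /\ Rel k (u k) (u (S k)).
Proof.
  intros Ha Hstep.
  set (next := fun k x => epsilon (inhabits a) (fun y => I y /\ Rel k x y)).
  set (u := fix u k := match k with O => a | S k' => next k' (u k') end).
  assert (Hnext : forall k x, I x -> I (next k x) /\ Rel k x (next k x))
    by (intros k x Hx; exact (epsilon_spec _ _ (Hstep k x Hx))).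
  assert (Hu : forall k, I (u k))
    by (induction k as [|k IH]; [exact Ha | exact (proj1 (Hnext k _ IH))]).
  exists u. split; [reflexivity|].
  intros k. exact (conj (Hu k) (proj2 (Hnext k _ (Hu k)))).
Qed.

Lemma exists_approx_inf {A : Type} (S : A -> Prop) (F : A -> R) (c e : R) (z : A) :
  S z -> (forall y, S y -> c <= F y) -> 0 < e ->
  exists y, S y /\ forall w, S w -> F y <= F w + e.
Proof.
  intros Hz Hc He.
  set (E := fun r => exists w, S w /\ r = - F w).
  assert (Hb : bound E).
  { exists (- c). intros r [w [Hw ->]]. specialize (Hc w Hw). lra. }
  destruct (completeness E Hb (ex_intro _ (- F z) (ex_intro _ z (conj Hz eq_refl))))
    as [m [Hub Hlub]].
  destruct (classic (exists w, S w /\ m - e < - F w)) as [[w [Hw Hlt]] | Hn].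
  - exists w; split; [exact Hw|]. intros w' Hw'.
    assert (- F w' <= m) by (apply Hub; exists w'; auto). lra.
  - exfalso. assert (m <= m - e); [|lra].
    apply Hlub. intros r [w [Hw ->]].
    apply Rnot_lt_le. intros Hlt. apply Hn. exists w; auto.
Qed.

Lemma ex_series_telescoping_le (a u : nat -> R) (c : R) :
  (forall k, 0 <= a k) -> (forall k, a k <= u k - u (S k)) -> (forall k, c <= u k) ->
  ex_series a.
Proof.
  intros Ha Hau Hc.
  assert (Hpart : forall n, sum_n a n <= u O - u (S n)).
  { induction n as [|n IH].
    - rewrite sum_O. apply Hau.
    - rewrite sum_Sn. specialize (Hau (S n)).
      change (plus (sum_n a n) (a (S n))) with (sum_n a n + a (S n)). lra. }
  destruct (ex_finite_lim_seq_incr (sum_n a) (u O - c)) as [L HL].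
  - intros n. rewrite sum_Sn.
    change (plus (sum_n a n) (a (S n))) with (sum_n a n + a (S n)).
    specialize (Ha (S n)). lra.
  - intros n. specialize (Hpart n). specialize (Hc (S n)). lra.
  - exists L. exact HL.
Qed.

Section MetricSpace.
Context {M : Type} (d : M -> M -> R).
Hypothesis Hm : is_metric d.
Hypothesis Hcomplete : mcomplete d.

Lemma dist_ge0 x y : 0 <= d x y.
Proof. destruct Hm as [H _]. apply H. Qed.

Lemma dist_sym x y : d x y = d y x.
Proof. destruct Hm as [_ [_ [H _]]]. apply H. Qed.

Lemma dist_triangle x y z : d x z <= d x y + d y z.
Proof. destruct Hm as [_ [_ [_ H]]]. apply H. Qed.

Lemma dist_refl x : d x x = 0.
Proof. destruct Hm as [_ [H _]]. apply H; reflexivity. Qed.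

Lemma dist_small_eq x y : (forall e, 0 < e -> d x y < e) -> x = y.
Proof.
  intros Hsmall. destruct Hm as [_ [H _]]. apply H.
  apply Rle_antisym; [|apply dist_ge0].
  apply le_epsilon. intros e He. specialize (Hsmall e He). lra.
Qed.

Lemma mconv_shift (u : nat -> M) (l : M) (n : nat) :
  mconv d u l -> mconv d (fun k => u (n + k)%nat) l.
Proof.
  intros Hu e He. destruct (Hu e He) as [N HN].
  exists N. intros k Hk. apply HN. lia.
Qed.

Lemma slope_is_glb (F : M -> Rbar) x :
  Rbar_is_glb (fun v => exists delta, 0 < delta /\ v = slope_ball d F x delta)
    (slope d F x).
Proof. unfold slope, Rbar_glb. destruct (Rbar_ex_glb _) as [l Hl]. exact Hl. Qed.

Lemma slope_lt_ball (F : M -> Rbar) x (c : R) :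
  Rbar_lt (slope d F x) (Finite c) ->
  exists delta, 0 < delta /\ forall y, 0 < d x y -> d x y < delta ->
    pos_diff (F x) (F y) / d x y < c.
Proof.
  intros H.
  destruct (classic (exists delta, 0 < delta /\
                       Rbar_lt (slope_ball d F x delta) (Finite c)))
    as [[delta [Hd Hlt]] | Hn].
  - exists delta; split; [exact Hd|]. intros y Hy1 Hy2.
    refine (Rbar_le_lt_trans _ _ _ (proj1 (Lub_Rbar_correct _) _ _) Hlt).
    right. exists y. auto.
  - exfalso. destruct (slope_is_glb F x) as [_ Hglb].
    assert (Hlb : Rbar_le (Finite c) (slope d F x)).
    { apply Hglb. intros v [delta [Hd ->]].
      apply Rbar_not_lt_le. intros Hlt. apply Hn. exists delta; auto. }
    exact (Rbar_lt_not_le _ _ H Hlb).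
Qed.

Lemma slope_gt_near (F : M -> Rbar) x (c : R) :
  0 < c -> Rbar_lt (Finite c) (slope d F x) ->
  forall delta, 0 < delta -> exists y, 0 < d x y /\ d x y < delta /\
    c < pos_diff (F x) (F y) / d x y.
Proof.
  intros Hc H delta Hd.
  assert (Hball := Rbar_lt_le_trans _ _ _ H
                     (proj1 (slope_is_glb F x) _ (ex_intro _ delta (conj Hd eq_refl)))).
  apply NNPP. intros Hn.
  assert (Hle : Rbar_le (slope_ball d F x delta) (Finite c)).
  { apply (proj2 (Lub_Rbar_correct _)). intros r [-> | [y [Hy1 [Hy2 ->]]]]; simpl.
    - lra.
    - apply Rnot_lt_le. intros Hlt. apply Hn. exists y; auto. }
  exact (Rbar_lt_not_le _ _ Hball Hle).
Qed.

Section Ekeland.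
Variables (P : M -> Prop) (F : M -> R) (eps : R).
Hypothesis Heps : 0 < eps.
Hypothesis HP_closed : forall u l, mconv d u l -> (forall n, P (u n)) -> P l.
Hypothesis HF_lsc : forall z, P z -> forall t, t < F z ->
  exists delta, 0 < delta /\ forall y, P y -> d z y < delta -> t < F y.
Hypothesis HF_bounded : exists c, forall y, P y -> c <= F y.

(* Brøndsted's order underlying Ekeland's principle. *)
Definition ekeland_le (y z : M) : Prop := P y /\ F y + eps * d y z <= F z.

Lemma ekeland_le_refl z : P z -> ekeland_le z z.
Proof. intros Hz. split; [exact Hz|]. rewrite dist_refl. lra. Qed.

Lemma ekeland_le_trans x y z : ekeland_le x y -> ekeland_le y z -> ekeland_le x z.
Proof.
  intros [Hx Hxy] [_ Hyz]. split; [exact Hx|].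
  assert (eps * d x z <= eps * (d x y + d y z))
    by (apply Rmult_le_compat_l; [lra | apply dist_triangle]).
  lra.
Qed.

Lemma ekeland_le_closed (u : nat -> M) (l z : M) :
  mconv d u l -> (forall n, ekeland_le (u n) z) -> ekeland_le l z.
Proof.
  intros Hu Huz.
  assert (Hl : P l) by (apply (HP_closed u); [exact Hu | intros n; apply Huz]).
  split; [exact Hl|]. apply Rnot_lt_le. intros Hlt.
  set (gap := F l + eps * d l z - F z).
  destruct (HF_lsc l Hl (F l - gap / 2) ltac:(unfold gap; lra)) as [delta [Hd Hdel]].
  destruct (Hu (Rmin delta (gap / 2 / eps))) as [N HN].
  { apply Rmin_pos; [exact Hd|]. apply Rdiv_lt_0_compat; unfold gap; lra. }
  specialize (HN N (le_n N)).
  assert (Hnear : F l - gap / 2 < F (u N)).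
  { apply Hdel; [apply Huz|]. rewrite dist_sym.
    exact (Rlt_le_trans _ _ _ HN (Rmin_l _ _)). }
  assert (Hclose : d (u N) l * eps < gap / 2)
    by (apply Rlt_div_r; [exact Heps | exact (Rlt_le_trans _ _ _ HN (Rmin_r _ _))]).
  assert (Htri : eps * d l z <= eps * (d l (u N) + d (u N) z))
    by (apply Rmult_le_compat_l; [lra | apply dist_triangle]).
  rewrite (dist_sym l (u N)) in Htri.
  destruct (Huz N) as [_ HuN]. unfold gap in *. lra.
Qed.

Lemma ekeland_chain (x : M) : P x ->
  exists zs : nat -> M, zs O = x /\ forall k, P (zs k) /\
    ekeland_le (zs (S k)) (zs k) /\
    forall y, ekeland_le y (zs (S k)) -> eps * d y (zs (S k)) <= / INR (S k).
Proof.
  intros Hx. destruct HF_bounded as [c Hc].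
  destruct (dependent_choice_seq P (fun k z z' => ekeland_le z' z /\
              forall w, ekeland_le w z -> F z' <= F w + / INR (S k)) x Hx)
    as [zs [Hzs0 Hzs]].
  { intros k z Hz.
    destruct (exists_approx_inf (fun y => ekeland_le y z) F c (/ INR (S k)) z)
      as [z' [Hz' Happrox]].
    - exact (ekeland_le_refl z Hz).
    - intros y [Hy _]. exact (Hc y Hy).
    - apply Rinv_0_lt_compat, lt_0_INR. lia.
    - exists z'. exact (conj (proj1 Hz') (conj Hz' Happrox)). }
  exists zs. split; [exact Hzs0|]. intros k.
  destruct (Hzs k) as [Hk [Hstep Happrox]].
  split; [exact Hk|]. split; [exact Hstep|].
  (* every y below zs (S k) is also below zs k, and zs (S k) almost minimises F there *)
  intros y Hy. specialize (Happrox y (ekeland_le_trans _ _ _ Hy Hstep)).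
  destruct Hy as [_ Hy]. lra.
Qed.

Section Chain.
Variable zs : nat -> M.
Hypothesis Hzs_P : forall k, P (zs k).
Hypothesis Hzs_step : forall k, ekeland_le (zs (S k)) (zs k).
Hypothesis Hzs_radius : forall k y, ekeland_le y (zs (S k)) ->
  eps * d y (zs (S k)) <= / INR (S k).

Lemma chain_ekeland_le k m : (k <= m)%nat -> ekeland_le (zs m) (zs k).
Proof.
  induction 1 as [|m _ IH]; [exact (ekeland_le_refl _ (Hzs_P k))|].
  exact (ekeland_le_trans _ _ _ (Hzs_step m) IH).
Qed.

Lemma chain_radius_lt e : 0 < e ->
  exists N, forall y, ekeland_le y (zs N) -> d y (zs N) < e.
Proof.
  intros He. destruct (archimed_cor1 (eps * e)) as [[|N] [HN HN0]].
  { apply Rmult_lt_0_compat; lra. }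
  { lia. }
  exists (S N). intros y Hy. specialize (Hzs_radius N y Hy).
  apply (Rmult_lt_reg_l eps); [exact Heps | lra].
Qed.

Lemma chain_cauchy : mcauchy d zs.
Proof.
  intros e He. destruct (chain_radius_lt (e / 2)) as [N HN]; [lra|].
  exists N. intros m n Hm' Hn'.
  assert (Hmn := dist_triangle (zs m) (zs N) (zs n)).
  rewrite (dist_sym (zs N) (zs n)) in Hmn.
  assert (HmN := HN _ (chain_ekeland_le N m Hm')).
  assert (HnN := HN _ (chain_ekeland_le N n Hn')).
  lra.
Qed.

Lemma chain_limit_le z k : mconv d zs z -> ekeland_le z (zs k).
Proof.
  intros Hz. apply (ekeland_le_closed (fun n => zs (k + n)%nat)).
  - exact (mconv_shift zs z k Hz).
  - intros n. apply chain_ekeland_le. lia.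
Qed.

Lemma chain_limit_minimal z y : mconv d zs z -> ekeland_le y z -> y = z.
Proof.
  intros Hz Hyz. apply dist_small_eq. intros e He.
  destruct (chain_radius_lt (e / 2)) as [N HN]; [lra|].
  assert (HzN := chain_limit_le z N Hz).
  assert (HyN := HN y (ekeland_le_trans _ _ _ Hyz HzN)).
  assert (HzN' := HN z HzN).
  assert (Hyz' := dist_triangle y (zs N) z). rewrite (dist_sym (zs N) z) in Hyz'.
  lra.
Qed.
End Chain.

Theorem ekeland_variational_principle (x : M) : P x ->
  exists z, ekeland_le z x /\ forall y, P y -> F z <= F y + eps * d y z.
Proof.
  intros Hx. destruct (ekeland_chain x Hx) as [zs [Hzs0 Hzs]].
  assert (Hzs_P : forall k, P (zs k)) by (intros k; apply Hzs).
  assert (Hzs_step : forall k, ekeland_le (zs (S k)) (zs k)) by (intros k; apply Hzs).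
  assert (Hzs_radius : forall k y, ekeland_le y (zs (S k)) ->
            eps * d y (zs (S k)) <= / INR (S k)) by (intros k; apply Hzs).
  destruct (Hcomplete zs (chain_cauchy zs Hzs_P Hzs_step Hzs_radius)) as [z Hz].
  exists z. split.
  - rewrite <- Hzs0. exact (chain_limit_le zs Hzs_P Hzs_step z O Hz).
  - intros y Hy. apply Rnot_lt_le. intros Hlt.
    assert (Hyz : ekeland_le y z) by (split; [exact Hy | lra]).
    rewrite (chain_limit_minimal zs Hzs_P Hzs_step Hzs_radius z y Hz Hyz),
      dist_refl in Hlt.
    lra.
Qed.
End Ekeland.

Section Descent.
Variables (f : M -> Rbar) (g : M -> R).
Hypothesis Hproper : proper_fun f.
Hypothesis Hlsc : lsc d f.
Hypothesis Hbdd : bounded_below f.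
Hypothesis Hg : mcontinuous d g.
Hypothesis Hslope : forall x, dom f x -> ~ crit d 0 f x ->
  Rbar_lt (slope d (fun y => Finite (g y)) x) (slope d f x).

Definition freal (y : M) : R := real (f y).
Definition fsubg (y : M) : R := freal y - g y.
Definition sublevel (a : R) (y : M) : Prop := dom f y /\ fsubg y <= a.

Lemma f_finite y : dom f y -> f y = Finite (freal y).
Proof.
  unfold dom, freal. destruct Hproper as [Hn _]. specialize (Hn y).
  destruct (f y); simpl; tauto.
Qed.

Lemma fsubg_Rbar_le x y : dom f x -> dom f y ->
  Rbar_le (Rbar_plus (f y) (Finite (- g y))) (Rbar_plus (f x) (Finite (- g x))) <->
  fsubg y <= fsubg x.
Proof.
  intros Hx Hy. rewrite (f_finite x Hx), (f_finite y Hy).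
  cbn [Rbar_le Rbar_plus Rbar_plus']. unfold fsubg. lra.
Qed.

Lemma freal_lsc z t : dom f z -> t < freal z ->
  exists delta, 0 < delta /\ forall y, dom f y -> d z y < delta -> t < freal y.
Proof.
  intros Hz Ht. destruct (Hlsc z t) as [delta [Hd Hdel]].
  { rewrite (f_finite z Hz). exact Ht. }
  exists delta. split; [exact Hd|]. intros y Hy Hzy.
  specialize (Hdel y Hzy). rewrite (f_finite y Hy) in Hdel. exact Hdel.
Qed.

Lemma sublevel_closed a (u : nat -> M) l :
  mconv d u l -> (forall n, sublevel a (u n)) -> sublevel a l.
Proof.
  intros Hu Hsub. apply NNPP. intros Hl.
  (* outside the sublevel set, f l > a + g l also when f l = +oo *)
  assert (Hfl : Rbar_lt (Finite (a + g l)) (f l)).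
  { destruct Hproper as [Hn _]. specialize (Hn l). unfold sublevel, dom, fsubg, freal in Hl.
    destruct (f l); simpl in *; [lra | exact I | tauto]. }
  destruct (Rbar_lt_exists_between _ _ (a + g l) Hfl Hfl) as [t [Ht [_ Htf]]].
  destruct (Hlsc l t Htf) as [d1 [Hd1 Hdel1]].
  destruct (Hg l (t - a - g l) ltac:(lra)) as [d2 [Hd2 Hdel2]].
  destruct (Hu (Rmin d1 d2) (Rmin_pos _ _ Hd1 Hd2)) as [N HN].
  specialize (HN N (le_n N)). rewrite dist_sym in HN.
  assert (Hf := Hdel1 (u N) (Rlt_le_trans _ _ _ HN (Rmin_l _ _))).
  assert (Hgu := Hdel2 (u N) (Rlt_le_trans _ _ _ HN (Rmin_r _ _))).
  destruct (Hsub N) as [HuN HuNa].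
  rewrite (f_finite _ HuN) in Hf. simpl in Hf.
  apply Rabs_def2 in Hgu. unfold fsubg in HuNa. lra.
Qed.

Lemma slope_gap_descent z c : dom f z -> 0 < c ->
  Rbar_lt (slope d (fun y => Finite (g y)) z) (Finite c) ->
  Rbar_lt (Finite c) (slope d f z) ->
  exists y, dom f y /\ fsubg y < fsubg z /\ c * d z y < freal z - freal y.
Proof.
  intros Hz Hc Hsg Hsf.
  destruct (slope_lt_ball _ z c Hsg) as [delta [Hd Hdel]].
  destruct (slope_gt_near f z c Hc Hsf delta Hd) as [y [Hy1 [Hy2 Hfy]]].
  specialize (Hdel y Hy1 Hy2). simpl in Hdel.
  apply Rlt_div_l in Hdel; [|exact Hy1].
  apply Rlt_div_r in Hfy; [|exact Hy1].
  assert (Hdy : dom f y).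
  { apply NNPP. intros Hny. destruct Hproper as [Hn _]. specialize (Hn y).
    unfold dom in Hny. rewrite (f_finite z Hz) in Hfy.
    destruct (f y); simpl in *; try tauto.
    assert (0 < c * d z y) by (apply Rmult_lt_0_compat; lra). lra. }
  rewrite (f_finite z Hz), (f_finite y Hdy) in Hfy. simpl in Hfy.
  assert (0 < c * d z y) by (apply Rmult_lt_0_compat; lra).
  exists y. split; [exact Hdy|].
  unfold Rmax in *. destruct (Rle_dec 0 (freal z - freal y)); [|lra].
  destruct (Rle_dec 0 (g z - g y)); unfold fsubg; split; lra.
Qed.

Lemma crit_of_sublevel_quasimin e z : 0 <= e -> dom f z ->
  (forall y, dom f y -> fsubg y < fsubg z -> freal z <= freal y + e * d y z) ->
  crit d e f z.
Proof.
  intros He Hz Hmin. split; [exact Hz|].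
  destruct (classic (crit d 0 f z)) as [[_ H0] | Hnc].
  { apply (Rbar_le_trans _ _ _ H0). exact He. }
  apply Rbar_not_lt_le. intros Hlt.
  destruct (Rbar_lt_exists_between _ _ e (Hslope z Hz Hnc) Hlt) as [c [Hec [Hgc Hcf]]].
  destruct (slope_gap_descent z c Hz ltac:(lra) Hgc Hcf) as [y [Hy [Hyz Hdesc]]].
  specialize (Hmin y Hy Hyz). rewrite (dist_sym y z) in Hmin.
  assert (e * d z y <= c * d z y) by (apply Rmult_le_compat_r; [apply dist_ge0 | lra]).
  lra.
Qed.

Definition descent_step (e : R) (x z : M) : Prop :=
  sublevel (fsubg x) z /\ freal z + e * d z x <= freal x /\ crit d e f z /\
  forall y, sublevel (fsubg x) y -> freal z <= freal y + e * d y z.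

Lemma descent_step_exists e x : 0 < e -> dom f x -> exists z, descent_step e x z.
Proof.
  intros He Hx.
  destruct (ekeland_variational_principle (sublevel (fsubg x)) freal e He) with (x := x)
    as [z [[Hz Hzx] Hmin]].
  - intros u l Hu Hsub. exact (sublevel_closed _ u l Hu Hsub).
  - intros z [Hz _] t Ht. destruct (freal_lsc z t Hz Ht) as [delta [Hd Hdel]].
    exists delta. split; [exact Hd|]. intros y [Hy _]. exact (Hdel y Hy).
  - destruct Hbdd as [c Hc]. exists c. intros y [Hy _].
    specialize (Hc y). rewrite (f_finite y Hy) in Hc. exact Hc.
  - split; [exact Hx | lra].
  - exists z. split; [exact Hz|]. split; [exact Hzx|]. split; [|exact Hmin].
    apply crit_of_sublevel_quasimin; [lra | exact (proj1 Hz)|].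
    intros y Hy Hyz. apply Hmin. split; [exact Hy | destruct Hz; lra].
Qed.

Lemma quasimin_limit_le (u : nat -> M) (e : nat -> R) (l y : M) :
  dom f l -> (forall k, dom f (u k)) -> mconv d u l ->
  (forall k, 0 < e k) -> is_lim_seq e 0 ->
  (forall k, freal (u k) <= freal y + e k * d y (u k)) -> freal l <= freal y.
Proof.
  intros Hl Hu Hconv He_pos He0 Hquasi. apply Rnot_lt_le. intros Hlt.
  set (gap := freal l - freal y).
  destruct (freal_lsc l (freal y + gap / 2) Hl ltac:(unfold gap; lra))
    as [delta [Hd Hdel]].
  assert (Hyl := dist_ge0 y l).
  assert (Hr : 0 < gap / 2 / (d y l + 1))
    by (apply Rdiv_lt_0_compat; unfold gap; lra).
  apply is_lim_seq_spec in He0. destruct (He0 (mkposreal _ Hr)) as [N1 HN1].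
  destruct (Hconv (Rmin delta 1) (Rmin_pos _ _ Hd Rlt_0_1)) as [N2 HN2].
  set (k := Nat.max N1 N2).
  specialize (HN1 k ltac:(unfold k; lia)). specialize (HN2 k ltac:(unfold k; lia)).
  simpl in HN1. rewrite Rminus_0_r, Rabs_pos_eq in HN1 by apply Rlt_le, He_pos.
  apply Rlt_div_r in HN1; [|lra].
  rewrite dist_sym in HN2.
  specialize (Hdel (u k) (Hu k) (Rlt_le_trans _ _ _ HN2 (Rmin_l _ _))).
  assert (Hyu := dist_triangle y l (u k)).
  assert (e k * d y (u k) <= e k * (d y l + 1)).
  { apply Rmult_le_compat_l; [apply Rlt_le, He_pos|].
    assert (d l (u k) < 1) by exact (Rlt_le_trans _ _ _ HN2 (Rmin_r _ _)). lra. }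
  specialize (Hquasi k). unfold gap in *. lra.
Qed.

Section DescentSequence.
Variables (eps : nat -> R) (xs : nat -> M).
Hypothesis Heps_pos : forall k, 0 < eps k.
Hypothesis Hxs_dom0 : dom f (xs O).
Hypothesis Hxs_step : forall k, descent_step (eps k) (xs k) (xs (S k)).

Lemma descent_dom k : dom f (xs k).
Proof. destruct k as [|k]; [exact Hxs_dom0 | exact (proj1 (proj1 (Hxs_step k)))]. Qed.

Lemma descent_fsubg_le n m : (n <= m)%nat -> fsubg (xs m) <= fsubg (xs n).
Proof.
  induction 1 as [|m _ IH]; [lra|].
  pose proof (proj2 (proj1 (Hxs_step m))). lra.
Qed.

Lemma descent_ex_series : ex_series (fun k => eps k * d (xs (S k)) (xs k)).
Proof.
  destruct Hbdd as [c Hc].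
  apply (ex_series_telescoping_le _ (fun k => freal (xs k)) c).
  - intros k. apply Rmult_le_pos; [apply Rlt_le, Heps_pos | apply dist_ge0].
  - intros k. pose proof (proj1 (proj2 (Hxs_step k))). lra.
  - intros k. specialize (Hc (xs k)). rewrite (f_finite _ (descent_dom k)) in Hc.
    exact Hc.
Qed.

Lemma descent_subseq_limit_crit (phi : nat -> nat) (l : M) :
  is_lim_seq eps 0 -> (forall k, (phi k < phi (S k))%nat) ->
  mconv d (fun k => xs (S (phi k))) l ->
  crit d 0 f l /\ fsubg l <= fsubg (xs O).
Proof.
  intros Heps0 Hphi Hconv.
  assert (Hphi_ge : forall k, (k <= phi k)%nat).
  { induction k as [|k IH]; [lia|]. specialize (Hphi k). lia. }
  assert (Hl : forall n, sublevel (fsubg (xs n)) l).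
  { intros n. apply (sublevel_closed _ (fun k => xs (S (phi (n + k)%nat)))).
    - exact (mconv_shift _ l n Hconv).
    - intros k. split; [apply descent_dom|].
      apply descent_fsubg_le. specialize (Hphi_ge (n + k)%nat). lia. }
  split; [|exact (proj2 (Hl O))].
  apply crit_of_sublevel_quasimin; [lra | exact (proj1 (Hl O))|].
  intros y Hy Hyl. rewrite Rmult_0_l, Rplus_0_r.
  apply (quasimin_limit_le (fun k => xs (S (phi k))) (fun k => eps (phi k)));
    [exact (proj1 (Hl O)) | intros k; apply descent_dom | exact Hconv
    | intros k; apply Heps_pos | |].
  - exact (is_lim_seq_subseq _ _ _ (eventually_subseq _ Hphi) Heps0).
  - intros k. apply (proj2 (proj2 (proj2 (Hxs_step (phi k))))).
    split; [exact Hy|]. pose proof (proj2 (Hl (phi k))). lra.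
Qed.
End DescentSequence.

Lemma descent_alternative x0 : dom f x0 ->
  (forall y, crit d 0 f y -> fsubg x0 < fsubg y) ->
  forall eps : nat -> R, (forall k, 0 < eps k) -> is_lim_seq eps 0 ->
  exists x : nat -> M,
    x O = x0 /\
    (forall k, crit d (eps k) f (x (S k))) /\
    (~ exists (phi : nat -> nat) (l : M),
         (forall k, (phi k < phi (S k))%nat) /\ mconv d (fun k => x (S (phi k))) l) /\
    ex_series (fun k => eps k * d (x (S k)) (x k)) /\
    (forall n, Rbar_le (Rbar_plus (f (x (S n))) (Finite (- g (x (S n)))))
                       (Rbar_plus (f (x n)) (Finite (- g (x n))))).
Proof.
  intros Hx0 Hna eps Hpos Heps0.
  destruct (dependent_choice_seq (dom f) (fun k => descent_step (eps k)) x0 Hx0)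
    as [xs [Hxs0 Hxs]].
  { intros k x Hx. destruct (descent_step_exists (eps k) x (Hpos k) Hx) as [z Hz].
    exists z. exact (conj (proj1 (proj1 Hz)) Hz). }
  assert (Hdom0 : dom f (xs O)) by (rewrite Hxs0; exact Hx0).
  assert (Hstep : forall k, descent_step (eps k) (xs k) (xs (S k))) by apply Hxs.
  exists xs. split; [exact Hxs0|]. split; [|split; [|split]].
  - intros k. exact (proj1 (proj2 (proj2 (Hstep k)))).
  - intros [phi [l [Hphi Hconv]]].
    destruct (descent_subseq_limit_crit eps xs Hpos Hdom0 Hstep phi l Heps0 Hphi Hconv)
      as [Hcrit Hle].
    specialize (Hna l Hcrit). rewrite Hxs0 in Hle. lra.
  - exact (descent_ex_series eps xs Hpos Hdom0 Hstep).
  - intros n. apply fsubg_Rbar_le; [apply (descent_dom eps xs Hdom0 Hstep)..|].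
    apply (descent_fsubg_le eps xs Hstep). lia.
Qed.
End Descent.

End MetricSpace.

Theorem theorem3p5 (M : Type) (d : M -> M -> R)
  (Hmetric : is_metric d) (Hcomplete : mcomplete d)
  (f : M -> Rbar) (g : M -> R)
  (Hproper : proper_fun f) (Hlsc : lsc d f) (Hbdd : bounded_below f)
  (Hg : mcontinuous d g)
  (Hslope : forall x, dom f x -> ~ crit d 0 f x ->
     Rbar_lt (slope d (fun y => Finite (g y)) x) (slope d f x))
  (x0 : M) (Hx0 : dom f x0) :
  (exists xb, crit d 0 f xb /\
     Rbar_le (Rbar_plus (f xb) (Finite (- g xb)))
             (Rbar_plus (f x0) (Finite (- g x0))))
  \/
  (forall eps : nat -> R,
     (forall k, 0 < eps k) ->
     (forall k, eps (S k) <= eps k) ->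
     is_lim_seq eps 0 ->
     exists x : nat -> M,
       x O = x0 /\
       (forall k, crit d (eps k) f (x (S k))) /\
       (~ exists (phi : nat -> nat) (l : M),
            (forall k, (phi k < phi (S k))%nat) /\ mconv d (fun k => x (S (phi k))) l) /\
       ex_series (fun k => eps k * d (x (S k)) (x k)) /\
       (forall n, Rbar_le (Rbar_plus (f (x (S n))) (Finite (- g (x (S n)))))
                          (Rbar_plus (f (x n)) (Finite (- g (x n)))))).
Proof.
  destruct (classic (exists xb, crit d 0 f xb /\
     Rbar_le (Rbar_plus (f xb) (Finite (- g xb)))
             (Rbar_plus (f x0) (Finite (- g x0))))) as [Ha | Hna].
  { left. exact Ha. }
  right. intros eps Hpos _ Heps0.
  apply (descent_alternative d Hmetric Hcomplete f g Hproper Hlsc Hbdd Hg Hslope x0 Hx0);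
    [| exact Hpos | exact Heps0].
  intros y Hy. apply Rnot_le_lt. intros Hle. apply Hna. exists y. split; [exact Hy|].
  exact (proj2 (fsubg_Rbar_le f g Hproper x0 y Hx0 (proj1 Hy)) Hle).
Qed.
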